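(* Let $n$ be a positive integer, let $\mathcal F$ be an $\mathcal N$-saturated family of subsets of $[n]$, and let $A_1,\dots,A_k$ and $B_1,\dots,B_l$ be sets in $\mathcal F$, where $k,l\ge1$, such that $\bigcup_{i=1}^l B_i\subseteq\bigcap_{i=1}^k A_i$. Then there exists $M\in\mathcal F$ such that $\bigcup_{i=1}^l B_i\subseteq M\subseteq\bigcap_{i=1}^k A_i$.
   Context: The poset $\mathcal N$ has four elements $a,b,c,d$ with $a<c$, $b<c$, $b<d$ and no other comparabilities. A family $\mathcal Q$ of sets (ordered by inclusion) contains an induced copy of $\mathcal N$ if there are distinct sets in $\mathcal Q$ whose inclusion relations are exactly those of $a,b,c,d$ above. A family $\mathcal F$ of subsets of $[n]=\{1,\dots,n\}$ is $\mathcal N$-saturated if $\mathcal F$ contains no induced copy of $\mathcal N$, but for every $S\subseteq[n]$ with $S\notin\mathcal F$, the family $\mathcal F\cup\{S\}$ contains an induced copy of $\mathcal N$. *)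

From mathcomp Require Import all_boot.
Set Implicit Arguments. Unset Strict Implicit. Unset Printing Implicit Defensive.

Definition comparable (T : finType) (X Y : {set T}) : bool :=
  (X \subset Y) || (Y \subset X).

Definition is_induced_N (T : finType) (a b c d : {set T}) : bool :=
  [&& uniq [:: a; b; c; d],
      a \subset c, b \subset c, b \subset d,
      ~~ comparable a b, ~~ comparable a d & ~~ comparable c d].

Definition contains_induced_N (T : finType) (Q : {set {set T}}) : Prop :=
  exists a b c d, [/\ a \in Q, b \in Q, c \in Q, d \in Q & is_induced_N a b c d].

Definition N_saturated (n : nat) (F : {set {set 'I_n}}) : Prop :=
  ~ contains_induced_N F /\
  forall S : {set 'I_n}, S \notin F -> contains_induced_N (S |: F).

From Pilot Require Import Defs.
From mathcomp Require Import all_boot.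
Set Implicit Arguments.
Unset Strict Implicit.
Unset Printing Implicit Defensive.

(* Let I be the intersection of the A_i and U the union of the members of F
   contained in I, so that U lies between the union of the B_j and I.  If U
   is not below a member e of F, some member of F below U is not below e,
   since U is a union of members; if e is not below U, then e is not below I,
   hence not below some A_i, which is a member of F above U.  So if U were
   not in F, U could be replaced, in the induced copy of N that saturation
   yields in F + {U}, by such members to give an induced copy of N inside F;
   when U is an end a or d of the zigzag a < c > b < d, one of two such
   members does it. *)

Section InducedN.

Variable T : finType.
Implicit Types a b c d I U X Y : {set T}.

Lemma is_induced_NE a b c d :
  is_induced_N a b c d =
  [&& a \subset c, b \subset c, b \subset d,
      ~~ (a \subset b), ~~ (b \subset a), ~~ (a \subset d), ~~ (d \subset a),
      ~~ (c \subset d) & ~~ (d \subset c)].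
Proof.
rewrite /is_induced_N /Defs.comparable !negb_or.
apply/idP/idP.
  case/and5P=> _ ac bc bd /and3P[/andP[nab nba] /andP[nad nda] /andP[ncd ndc]].
  by rewrite ac bc bd nab nba nad nda ncd ndc.
case/and5P=> ac bc bd nab /and5P[nba nad nda ncd ndc].
rewrite ac bc bd nab nba nad nda ncd ndc !andbT.
have neq (x y : {set T}) : ~~ (x \subset y) -> x != y.
  by apply: contraNneq => ->.
rewrite /= !inE !negb_or (neq _ _ nab) (neq _ _ nad) (neq _ _ ncd) /= !andbT.
apply/and3P; split.
- by apply: contraNneq nba => ->.
- by apply: contraNneq ncd => <-.
- by apply: contraNneq ndc => <-.
Qed.

Variable F : {set {set T}}.

Definition separated_from_below U :=
  forall e, e \in F -> ~~ (U \subset e) ->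
  exists2 X, X \in F & (X \subset U) && ~~ (X \subset e).

Definition separated_from_above U :=
  forall e, e \in F -> ~~ (e \subset U) ->
  exists2 Y, Y \in F & (U \subset Y) && ~~ (e \subset Y).

Hypothesis F_N_free : ~ contains_induced_N F.

Lemma N_free_no_N a b c d :
  a \in F -> b \in F -> c \in F -> d \in F -> ~~ is_induced_N a b c d.
Proof.
by move=> aF bF cF dF; apply/negP => N; apply: F_N_free; exists a, b, c, d.
Qed.

Section SeparatedFromBelow.

Variable U : {set T}.
Hypothesis sepU : separated_from_below U.

Lemma separated_below_no_N_a b c d :
  b \in F -> c \in F -> d \in F -> ~~ is_induced_N U b c d.
Proof.
move=> bF cF dF; apply/negP.
rewrite is_induced_NE.
case/and5P=> Uc bc bd nUb /and5P[nbU nUd ndU ncd ndc].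
have [X1 X1F /andP[X1U nX1b]] := sepU bF nUb.
have [X2 X2F /andP[X2U nX2d]] := sepU dF nUd.
have nbX1 : ~~ (b \subset X1) by apply: contra nbU => /subset_trans; apply.
have ndX1 : ~~ (d \subset X1) by apply: contra ndU => /subset_trans; apply.
have nbX2 : ~~ (b \subset X2) by apply: contra nbU => /subset_trans; apply.
have ndX2 : ~~ (d \subset X2) by apply: contra ndU => /subset_trans; apply.
have X1c := subset_trans X1U Uc; have X2c := subset_trans X2U Uc.
case X1d: (X1 \subset d).
  case X2b: (X2 \subset b).
    have nX2X1 : ~~ (X2 \subset X1).
      by apply: contra nX2d => /subset_trans; apply.
    have nX1X2 : ~~ (X1 \subset X2).
      by apply: contra nX1b => /subset_trans; apply.
    apply: (negP (N_free_no_N X2F X1F cF dF)).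
    by rewrite is_induced_NE X2c X1c X1d nX2X1 nX1X2 nX2d ndX2 ncd ndc.
  apply: (negP (N_free_no_N X2F bF cF dF)).
  by rewrite is_induced_NE X2c bc bd X2b nbX2 nX2d ndX2 ncd ndc.
apply: (negP (N_free_no_N X1F bF cF dF)).
by rewrite is_induced_NE X1c bc bd X1d nX1b nbX1 ndX1 ncd ndc.
Qed.

Lemma separated_below_no_N_b a c d :
  a \in F -> c \in F -> d \in F -> ~~ is_induced_N a U c d.
Proof.
move=> aF cF dF; apply/negP.
rewrite is_induced_NE.
case/and5P=> ac Uc Ud naU /and5P[nUa nad nda ncd ndc].
have [X XF /andP[XU nXa]] := sepU aF nUa.
have naX : ~~ (a \subset X) by apply: contra naU => /subset_trans; apply.
apply: (negP (N_free_no_N aF XF cF dF)).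
rewrite is_induced_NE ac (subset_trans XU Uc).
by rewrite (subset_trans XU Ud) naX nXa nad nda ncd ndc.
Qed.

End SeparatedFromBelow.

Section SeparatedFromAbove.

Variable U : {set T}.
Hypothesis sepU : separated_from_above U.

Lemma separated_above_no_N_c a b d :
  a \in F -> b \in F -> d \in F -> ~~ is_induced_N a b U d.
Proof.
move=> aF bF dF; apply/negP.
rewrite is_induced_NE.
case/and5P=> aU bU bd nab /and5P[nba nad nda nUd ndU].
have [Y YF /andP[UY ndY]] := sepU dF ndU.
have nYd : ~~ (Y \subset d) by apply: contra nUd; apply: subset_trans.
apply: (negP (N_free_no_N aF bF YF dF)).
rewrite is_induced_NE (subset_trans aU UY).
by rewrite (subset_trans bU UY) bd nab nba nad nda nYd ndY.
Qed.

Lemma separated_above_no_N_d a b c :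
  a \in F -> b \in F -> c \in F -> ~~ is_induced_N a b c U.
Proof.
move=> aF bF cF; apply/negP.
rewrite is_induced_NE.
case/and5P=> ac bc bU nab /and5P[nba naU nUa ncU nUc].
have [Y1 Y1F /andP[UY1 naY1]] := sepU aF naU.
have [Y2 Y2F /andP[UY2 ncY2]] := sepU cF ncU.
have nY1a : ~~ (Y1 \subset a) by apply: contra nUa; apply: subset_trans.
have nY1c : ~~ (Y1 \subset c) by apply: contra nUc; apply: subset_trans.
have nY2a : ~~ (Y2 \subset a) by apply: contra nUa; apply: subset_trans.
have nY2c : ~~ (Y2 \subset c) by apply: contra nUc; apply: subset_trans.
have bY1 := subset_trans bU UY1; have bY2 := subset_trans bU UY2.
case cY1: (c \subset Y1).
  case aY2: (a \subset Y2).
    have nY1Y2 : ~~ (Y1 \subset Y2) by apply: contra ncY2; apply: subset_trans.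
    have nY2Y1 : ~~ (Y2 \subset Y1) by apply: contra naY1; apply: subset_trans.
    apply: (negP (N_free_no_N aF bF Y2F Y1F)).
    by rewrite is_induced_NE aY2 bY2 bY1 nab nba naY1 nY1a nY2Y1 nY1Y2.
  apply: (negP (N_free_no_N aF bF cF Y2F)).
  by rewrite is_induced_NE ac bc bY2 aY2 nab nba nY2a ncY2 nY2c.
apply: (negP (N_free_no_N aF bF cF Y1F)).
by rewrite is_induced_NE ac bc bY1 cY1 nab nba naY1 nY1a nY1c.
Qed.

End SeparatedFromAbove.

Lemma separated_mem_N_saturated U :
  (forall S, S \notin F -> contains_induced_N (S |: F)) ->
  separated_from_below U -> separated_from_above U -> U \in F.
Proof.
move=> F_sat below above; apply: contraT.
case/F_sat=> [a [b [c [d [aUF bUF cUF dUF N]]]]].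
suff : ~~ is_induced_N a b c d by rewrite N.
move: aUF bUF cUF dUF.
case/setU1P=> [->|aF]; case/setU1P=> [->|bF]; case/setU1P=> [->|cF];
  case/setU1P=> [->|dF];
  (* copies using U twice are not made of distinct sets *)
  try by rewrite /is_induced_N /= !inE !eqxx /= ?orbT /= ?andbF.
- exact: separated_below_no_N_a.
- exact: separated_below_no_N_b.
- exact: separated_above_no_N_c.
- exact: separated_above_no_N_d.
- exact: N_free_no_N.
Qed.

Definition union_below (I : {set T}) : {set T} :=
  \bigcup_(X in F | X \subset I) X.

Lemma union_below_sub I : union_below I \subset I.
Proof. by apply/bigcupsP => X /andP[]. Qed.

Lemma sub_union_below I X : X \in F -> X \subset I -> X \subset union_below I.
Proof. by move=> XF XI; apply: (bigcup_sup X); rewrite XF. Qed.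

Lemma union_below_separated_from_below I :
  separated_from_below (union_below I).
Proof.
move=> e eF /subsetPn[x /bigcupP[X /andP[XF XI] xX] xe].
exists X => //; rewrite sub_union_below //=.
by apply/subsetPn; exists x.
Qed.

Lemma union_below_bigcap_separated_from_above (J : finType) (A : J -> {set T}) :
  (forall i, A i \in F) -> separated_from_above (union_below (\bigcap_i A i)).
Proof.
move=> AF e eF neU.
have /subsetPn[x xe] : ~~ (e \subset \bigcap_i A i).
  by apply: contra neU; apply: sub_union_below.
rewrite -in_setC setC_bigcap => /bigcupP[i _]; rewrite inE => xAi.
exists (A i) => //.
rewrite (subset_trans (union_below_sub _) (bigcap_inf i _)) //=.
by apply/subsetPn; exists x.
Qed.

End InducedN.

Theorem lemma2p3 (n : nat) (F : {set {set 'I_n}}) (k l : nat)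
    (A : 'I_k -> {set 'I_n}) (B : 'I_l -> {set 'I_n}) :
  0 < n -> N_saturated F -> 0 < k -> 0 < l ->
  (forall i, A i \in F) -> (forall j, B j \in F) ->
  (\bigcup_(j < l) B j) \subset (\bigcap_(i < k) A i) ->
  exists2 M, M \in F &
    ((\bigcup_(j < l) B j) \subset M) && (M \subset \bigcap_(i < k) A i).
Proof.
move=> _ [F_N_free F_sat] _ _ AF BF BA.
exists (union_below F (\bigcap_(i < k) A i)).
  apply: (separated_mem_N_saturated F_N_free F_sat).
    exact: union_below_separated_from_below.
  exact: union_below_bigcap_separated_from_above.
rewrite union_below_sub andbT.
apply/bigcupsP => j _; apply: sub_union_below => //.
exact: subset_trans (bigcup_sup j _) BA.
Qed.
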